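(* Every linear operator $A:\mathbb{R}^n\to\mathbb{R}^n$ similar to an operator that is GTP (respectively, GSTP) with respect to some totally positive structure is itself GTP (respectively, GSTP) with respect to some totally positive structure. In particular, if $A$ is similar to an operator with a totally positive (respectively, strictly totally positive) matrix, then $A$ is GTP (respectively, GSTP) with respect to some totally positive structure.
   Context: A proper cone is a closed convex cone that is pointed and solid. $\wedge^j\mathbb{R}^n$ is the $j$th exterior power and $\wedge^jA$ the operator with $(\wedge^jA)(x_1\wedge\cdots\wedge x_j)=Ax_1\wedge\cdots\wedge Ax_j$. $B$ is $K$-nonnegative if $BK\subseteq K$ and $K$-positive if $B(K\setminus\{0\})\subseteq\operatorname{int}K$. A totally positive structure is a family $\{K_1,\ldots,K_n\}$, $K_j\subset\wedge^j\mathbb{R}^n$ a proper cone; $A$ is GTP (GSTP) with respect to it if $\wedge^jA$ is $K_j$-nonnegative ($K_j$-positive) for all $j=1,\ldots,n$. A matrix is totally positive (TP) if all its minors of every order are nonnegative, and strictly totally positive (STP) if all its minors of every order are positive (i.e. all compound matrices are entrywise nonnegative, resp. positive). *)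

From HB Require Import structures.
From mathcomp Require Import all_boot all_order all_algebra.
From mathcomp Require Import reals.
Set Implicit Arguments. Unset Strict Implicit. Unset Printing Implicit Defensive.
Import Order.TTheory GRing.Theory Num.Theory.
Local Open Scope ring_scope.

(* Index set of the standard basis e_I = e_{i_1} /\ ... /\ e_{i_j}
   (i_1 < ... < i_j) of the exterior power  /\^j R^n :
   the j-element subsets of {0,...,n-1}.  A vector of /\^j R^n is identified
   with its coordinate function  kset n j -> R. *)
Definition kset (n j : nat) := {I : {set 'I_n} | #|I| == j}.

(* the a-th smallest element of I *)
Definition kidx n j (I : kset n j) (a : 'I_j) : 'I_n :=
  @enum_val _ (pred_of_set (val I)) (cast_ord (esym (eqP (valP I))) a).

Definition minor (R : realType) n j (A : 'M[R]_n) (I J : kset n j) : R :=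
  \det (\matrix_(a < j, b < j) A (kidx I a) (kidx J b)).

(* the operator /\^j A in coordinates: its matrix in the basis (e_I) is the
   j-th compound matrix, (/\^j A) e_J = sum_I det A[I,J] e_I *)
Definition wedge_op (R : realType) n j (A : 'M[R]_n) (x : kset n j -> R)
  : kset n j -> R :=
  fun I => \sum_(J : kset n j) minor A I J * x J.

Section Cones.
Variables (R : realType) (S : finType).
Implicit Types (K : (S -> R) -> Prop) (x y : S -> R).

Definition in_interior K x : Prop :=
  exists2 e : R, 0 < e & forall y, (forall i, `|y i - x i| < e) -> K y.

Definition closed_set K : Prop :=
  forall x, (forall e : R, 0 < e -> exists y, K y /\ forall i, `|y i - x i| < e) -> K x.

Definition convex_cone K : Prop :=
  K (fun _ => 0) /\
  (forall x y, K x -> K y -> K (fun i => x i + y i)) /\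
  (forall (c : R) x, 0 <= c -> K x -> K (fun i => c * x i)).

Definition pointed K : Prop :=
  forall x, K x -> K (fun i => - x i) -> x = (fun _ => 0).

Definition solid K : Prop := exists x, in_interior K x.

Definition proper_cone K : Prop :=
  [/\ closed_set K, convex_cone K, pointed K & solid K].

Definition K_nonneg K (B : (S -> R) -> (S -> R)) : Prop :=
  forall x, K x -> K (B x).

Definition K_pos K (B : (S -> R) -> (S -> R)) : Prop :=
  forall x, K x -> x <> (fun _ => 0) -> in_interior K (B x).
End Cones.

Definition TP_structure (R : realType) n
  (K : forall j : nat, (kset n j -> R) -> Prop) : Prop :=
  forall j, (1 <= j <= n)%N -> proper_cone (K j).

Definition GTP (R : realType) n (A : 'M[R]_n)
  (K : forall j : nat, (kset n j -> R) -> Prop) : Prop :=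
  forall j, (1 <= j <= n)%N -> K_nonneg (K j) (@wedge_op R n j A).

Definition GSTP (R : realType) n (A : 'M[R]_n)
  (K : forall j : nat, (kset n j -> R) -> Prop) : Prop :=
  forall j, (1 <= j <= n)%N -> K_pos (K j) (@wedge_op R n j A).

Definition similarR (R : realType) n (A B : 'M[R]_n) : Prop :=
  exists2 P : 'M[R]_n, P \in unitmx & A = invmx P *m B *m P.

Definition TP_matrix (R : realType) n (A : 'M[R]_n) : Prop :=
  forall j, (1 <= j <= n)%N -> forall I J : kset n j, 0 <= minor A I J.

Definition STP_matrix (R : realType) n (A : 'M[R]_n) : Prop :=
  forall j, (1 <= j <= n)%N -> forall I J : kset n j, 0 < minor A I J.

From HB Require Import structures.
From mathcomp Require Import all_boot all_order all_algebra.
From mathcomp Require Import reals.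
From mathcomp Require Import fingroup perm lra.
From mathcomp Require Import boolp.
Set Implicit Arguments. Unset Strict Implicit. Unset Printing Implicit Defensive.
Import Order.TTheory GRing.Theory Num.Theory.
Local Open Scope ring_scope.

(* If A = P^-1 B P, the Cauchy-Binet formula makes /\^j P an invertible linear
   map with /\^j P o /\^j A = /\^j B o /\^j P.  Pulling each cone K_j back along
   /\^j P therefore gives proper cones (a linear homeomorphism preserves
   closedness, convexity, pointedness and solidity) with respect to which
   /\^j A is nonnegative, resp. positive, whenever /\^j B is for K_j.
   A TP (STP) matrix is GTP (GSTP) for the structure of nonnegative orthants. *)

Lemma kidx_inj n j (I : kset n j) : injective (kidx I).
Proof. by move=> a b /enum_val_inj /cast_ord_inj. Qed.

Lemma kidx_mem n j (I : kset n j) a : kidx I a \in val I.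
Proof. exact: (@enum_valP _ (pred_of_set (val I))). Qed.

Lemma kidx_surj n j (I : kset n j) y : y \in val I -> exists a, kidx I a = y.
Proof.
move=> Iy; exists (cast_ord (eqP (valP I)) (enum_rank_in Iy y)).
by rewrite /kidx cast_ordK (enum_rankK_in Iy Iy).
Qed.

Lemma kidx_set n j (I : kset n j) : val I = [set kidx I a | a in 'I_j].
Proof.
apply/setP=> y; apply/idP/imsetP => [/kidx_surj[a <-]|[a _ ->]].
  by exists a.
exact: kidx_mem.
Qed.

Lemma det_mulmx_ffun (R : comNzRingType) n j (X : 'M[R]_(j, n)) (Y : 'M[R]_(n, j)) :
  \det (X *m Y) = \sum_(f : {ffun 'I_j -> 'I_n})
     (\prod_a X a (f a)) * \det (\matrix_(a, b) Y (f a) b).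
Proof.
rewrite /determinant.
transitivity (\sum_(s : 'S_j) \sum_(f : {ffun 'I_j -> 'I_n})
   (-1) ^+ s * \prod_a (X a (f a) * Y (f a) (s a))).
  apply: eq_bigr => s _; rewrite -mulr_sumr; congr (_ * _).
  rewrite -(bigA_distr_bigA (fun a k => X a k * Y k (s a))).
  by apply: eq_bigr => a _; rewrite mxE.
rewrite exchange_big /=; apply: eq_bigr => f _.
rewrite mulr_sumr; apply: eq_bigr => s _.
rewrite big_split /= mulrCA; congr (_ * (_ * _)).
by apply: eq_bigr => a _; rewrite mxE.
Qed.

Lemma det_rowsub_noninj (R : comNzRingType) n j (Y : 'M[R]_(n, j)) (f : 'I_j -> 'I_n) :
  ~~ injectiveb f -> \det (\matrix_(a, b) Y (f a) b) = 0.
Proof.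
move=> /injectivePn[a1 [a2 Na Ef]].
by apply: (determinant_alternate Na) => b; rewrite !mxE Ef.
Qed.

Lemma det_rowperm_kidx (R : comNzRingType) n j (Y : 'M[R]_(n, j)) (I : kset n j)
    (s : 'S_j) :
  \det (\matrix_(a, b) Y (kidx I (s a)) b) =
  (-1) ^+ s * \det (\matrix_(a, b) Y (kidx I a) b).
Proof.
have -> : \matrix_(a, b) Y (kidx I (s a)) b =
          row_perm s (\matrix_(a, b) Y (kidx I a) b).
  by apply/matrixP => a b; rewrite !mxE.
by rewrite row_permE det_mulmx det_perm.
Qed.

(* An injective map 'I_j -> 'I_n is a j-subset (its image) listed in the order
   given by a permutation of 'I_j. *)
Definition kset_perm_ffun n j (p : kset n j * 'S_j) : {ffun 'I_j -> 'I_n} :=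
  [ffun a => kidx p.1 (p.2 a)].

Lemma kset_perm_ffun_inj n j : injective (@kset_perm_ffun n j).
Proof.
move=> [I1 s1] [I2 s2] /ffunP E.
have {}E a : kidx I1 (s1 a) = kidx I2 (s2 a) by have := E a; rewrite !ffunE.
have EI : I1 = I2.
  apply: val_inj; rewrite !kidx_set; apply/setP=> y.
  apply/imsetP/imsetP=> -[a _ ->].
    by exists (s2 (s1^-1 a))%g; rewrite // -E permKV.
  by exists (s1 (s2^-1 a))%g; rewrite // E permKV.
subst I2; congr (_, _); apply/permP => a.
exact: kidx_inj (E a).
Qed.

Lemma kset_perm_ffun_onto n j (f : {ffun 'I_j -> 'I_n}) : injective f ->
  f \in [set kset_perm_ffun p | p in [set: kset n j * 'S_j]].
Proof.
move=> finj.
have cardI : #|[set f a | a in 'I_j]| == j by rewrite card_imset // card_ord.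
pose I : kset n j := exist (fun I : {set 'I_n} => #|I| == j) _ cardI.
have exI a : exists b, kidx I b = f a by apply: kidx_surj; rewrite /= imset_f.
pose g a := odflt a [pick b | kidx I b == f a].
have gE a : kidx I (g a) = f a.
  rewrite /g; case: pickP => [b /eqP //|H].
  by have [b Hb] := exI a; have := H b; rewrite Hb eqxx.
have ginj : injective g by move=> a1 a2 E; apply: finj; rewrite -!gE E.
apply/imsetP; exists (I, perm ginj) => //.
by apply/ffunP => a; rewrite ffunE /= permE gE.
Qed.

Lemma cauchy_binet (R : comNzRingType) n j (X : 'M[R]_(j, n)) (Y : 'M[R]_(n, j)) :
  \det (X *m Y) = \sum_(I : kset n j)
     \det (\matrix_(a, b) X a (kidx I b)) * \det (\matrix_(a, b) Y (kidx I a) b).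
Proof.
pose G (f : {ffun 'I_j -> 'I_n}) :=
  (\prod_a X a (f a)) * \det (\matrix_(a, b) Y (f a) b).
pose inj_ffun := [set kset_perm_ffun p | p in [set: kset n j * 'S_j]].
have G0 f : f \notin inj_ffun -> G f = 0.
  move=> f_out; rewrite /G det_rowsub_noninj ?mulr0 //.
  by apply: contra f_out => /injectiveP; apply: kset_perm_ffun_onto.
rewrite det_mulmx_ffun -/G (bigID (mem inj_ffun)) /= [X in _ + X]big1 ?addr0 //.
rewrite big_imset /=; last exact: in2W (@kset_perm_ffun_inj n j).
rewrite (eq_bigl xpredT) => [|p]; last by rewrite inE.
rewrite -(pair_bigA _ (fun I s => G (kset_perm_ffun (I, s)))) /=.
apply: eq_bigr => I _; rewrite {1}/determinant mulr_suml.
apply: eq_bigr => s _; rewrite /G.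
have -> : \matrix_(a, b) Y (kset_perm_ffun (I, s) a) b =
          \matrix_(a, b) Y (kidx I (s a)) b.
  by apply/matrixP=> a b; rewrite !mxE ffunE.
rewrite det_rowperm_kidx mulrCA mulrA; congr (_ * _ * _).
by apply: eq_bigr => a _; rewrite !mxE ffunE.
Qed.

Lemma minorM (R : realType) n j (P Q : 'M[R]_n) (I J : kset n j) :
  minor (P *m Q) I J = \sum_(K : kset n j) minor P I K * minor Q K J.
Proof.
rewrite /minor.
have -> : \matrix_(a, b) (P *m Q) (kidx I a) (kidx J b) =
  (\matrix_(a, k) P (kidx I a) k) *m (\matrix_(k, b) Q k (kidx J b)).
  by apply/matrixP => a b; rewrite !mxE; apply: eq_bigr => k _; rewrite !mxE.
rewrite cauchy_binet; apply: eq_bigr => K _.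
by congr (_ * _); congr (\det _); apply/matrixP => a b; rewrite !mxE.
Qed.

Lemma minor1 (R : realType) n j (I J : kset n j) :
  minor (1%:M : 'M[R]_n) I J = (I == J)%:R.
Proof.
rewrite /minor; have [<-|NIJ] := eqVneq I J.
  have -> : \matrix_(a, b) (1%:M : 'M[R]_n) (kidx I a) (kidx I b) = 1%:M.
    by apply/matrixP => a b; rewrite !mxE (inj_eq (@kidx_inj _ _ I)).
  by rewrite det1.
have [b Jb] : exists b, kidx J b \notin val I.
  apply/existsP; apply: contraNT NIJ; rewrite negb_exists => /forallP JsubI.
  apply/eqP/val_inj/eqP; rewrite eq_sym eqEcard (eqP (valP I)) (eqP (valP J)).
  rewrite leqnn andbT; apply/subsetP => y; rewrite kidx_set => /imsetP[a _ ->].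
  by rewrite -[_ \in _]negbK JsubI.
rewrite (expand_det_col _ b) big1 // => a _; rewrite !mxE.
case: eqP => [Eab|_]; last by rewrite mul0r.
by rewrite -Eab kidx_mem in Jb.
Qed.

Lemma wedge_opM (R : realType) n j (P Q : 'M[R]_n) (x : kset n j -> R) :
  wedge_op (P *m Q) x = wedge_op P (wedge_op Q x).
Proof.
apply: funext => I; rewrite /wedge_op.
under eq_bigr => J _ do rewrite minorM mulr_suml.
rewrite exchange_big /=; apply: eq_bigr => K _.
by rewrite mulr_sumr; apply: eq_bigr => J _; rewrite mulrA.
Qed.

Lemma wedge_op1 (R : realType) n j (x : kset n j -> R) :
  wedge_op (1%:M : 'M[R]_n) x = x.
Proof.
apply: funext => I; rewrite /wedge_op (bigD1 I) //= big1.
  by rewrite minor1 eqxx mul1r addr0.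
by move=> J /negbTE NJ; rewrite minor1 eq_sym NJ mul0r.
Qed.

Section WedgeUnit.
Variables (R : realType) (n j : nat) (P : 'M[R]_n).
Hypothesis P_unit : P \in unitmx.

Lemma wedge_opK : cancel (@wedge_op R n j P) (wedge_op (invmx P)).
Proof. by move=> x; rewrite -wedge_opM mulVmx // wedge_op1. Qed.

Lemma wedge_opVK : cancel (@wedge_op R n j (invmx P)) (wedge_op P).
Proof. by move=> x; rewrite -wedge_opM mulmxV // wedge_op1. Qed.

End WedgeUnit.

Section LinearOperators.
Variables (R : realType) (S : finType).
Implicit Types (M N : S -> S -> R) (K : (S -> R) -> Prop) (x y z : S -> R).

Definition lin_op M x : S -> R := fun I => \sum_J M I J * x J.

Lemma lin_op0 M : lin_op M (fun _ => 0) = (fun _ => 0).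
Proof.
by apply: funext => I; rewrite /lin_op big1 // => J _; rewrite mulr0.
Qed.

Lemma lin_opD M x y :
  lin_op M (fun i => x i + y i) = (fun I => lin_op M x I + lin_op M y I).
Proof.
apply: funext => I; rewrite /lin_op -big_split.
by apply: eq_bigr => J _; rewrite mulrDr.
Qed.

Lemma lin_opZ M c x : lin_op M (fun i => c * x i) = (fun I => c * lin_op M x I).
Proof.
apply: funext => I; rewrite /lin_op mulr_sumr.
by apply: eq_bigr => J _; rewrite mulrCA.
Qed.

Lemma lin_opN M x : lin_op M (fun i => - x i) = (fun I => - lin_op M x I).
Proof.
apply: funext => I; rewrite /lin_op -sumrN.
by apply: eq_bigr => J _; rewrite mulrN.
Qed.

Lemma lin_op_unif_continuous M (e : R) : 0 < e ->
  exists2 d : R, 0 < d & forall x y,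
    (forall J, `|y J - x J| < d) -> forall I, `|lin_op M y I - lin_op M x I| < e.
Proof.
move=> e_gt0; pose C := \sum_I \sum_J `|M I J|.
have C_ge0 : 0 <= C by apply: sumr_ge0 => I _; apply: sumr_ge0.
have C1_gt0 : 0 < C + 1 by rewrite ltr_wpDl.
exists (e / (C + 1)); first by rewrite divr_gt0.
move=> x y near_xy I.
have rowC : \sum_J `|M I J| <= C.
  rewrite /C [leRHS](bigD1 I) //= lerDl.
  by apply: sumr_ge0 => I' _; apply: sumr_ge0.
have -> : lin_op M y I - lin_op M x I = \sum_J M I J * (y J - x J).
  by rewrite /lin_op -sumrB; apply: eq_bigr => J _; rewrite mulrBr.
apply: le_lt_trans (ler_norm_sum _ _ _) _.
apply: (@le_lt_trans _ _ (C * (e / (C + 1)))).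
  apply: le_trans (_ : \sum_J `|M I J| * (e / (C + 1)) <= _).
    apply: ler_sum => J _; rewrite normrM ler_wpM2l //.
    exact: ltW.
  by rewrite -mulr_suml ler_pM2r // divr_gt0.
by rewrite mulrA ltr_pdivrMr //; nra.
Qed.

Lemma in_interior_preim M K y :
  in_interior K (lin_op M y) -> in_interior (fun x => K (lin_op M x)) y.
Proof.
move=> [e e_gt0 ballK]; have [d d_gt0 Md] := lin_op_unif_continuous M e_gt0.
by exists d => // x near_y; apply: ballK => I; apply: Md.
Qed.

Section Automorphism.
Variables M N : S -> S -> R.
Hypotheses (MK : cancel (lin_op M) (lin_op N)) (NK : cancel (lin_op N) (lin_op M)).

Lemma proper_cone_preim K :
  proper_cone K -> proper_cone (fun x => K (lin_op M x)).
Proof.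
move=> [K_closed [K0 [KD KZ]] K_pointed [z z_int]]; split.
- move=> x x_lim; apply: K_closed => e e_gt0.
  have [d d_gt0 Md] := lin_op_unif_continuous M e_gt0.
  have [y [Ky near_y]] := x_lim d d_gt0.
  by exists (lin_op M y); split => // I; apply: Md.
- split; first by rewrite lin_op0.
  split; first by move=> x y Kx Ky; rewrite lin_opD; apply: KD.
  by move=> c x c_ge0 Kx; rewrite lin_opZ; apply: KZ.
- move=> x Kx; rewrite lin_opN => /(K_pointed _ Kx) Mx0.
  by rewrite -[x]MK Mx0 lin_op0.
- by exists (lin_op N z); apply: in_interior_preim; rewrite NK.
Qed.

End Automorphism.

Lemma finite_pos_lower_bound z : (forall i, 0 < z i) ->
  exists2 e : R, 0 < e & forall i, e <= z i.
Proof.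
move=> z_gt0.
suff [e e_gt0 ez] : exists2 e : R, 0 < e & forall i, i \in enum S -> e <= z i.
  by exists e => // i; apply: ez; rewrite mem_enum.
elim: (enum S) => [|a s [e e_gt0 ez]]; first by exists 1.
exists (Order.min e (z a)); first by rewrite lt_min e_gt0 z_gt0.
move=> i; rewrite inE => /orP[/eqP ->|si]; first by rewrite ge_min lexx orbT.
by rewrite ge_min ez.
Qed.

Definition orthant x : Prop := forall i, 0 <= x i.

Lemma in_interior_orthant z : (forall i, 0 < z i) -> in_interior orthant z.
Proof.
move=> z_gt0; have [e e_gt0 ez] := finite_pos_lower_bound z_gt0.
exists e => // y near_y i.
by have := near_y i; have := ez i; rewrite ltr_norml => ? /andP[? _]; lra.
Qed.

Lemma proper_cone_orthant : proper_cone orthant.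
Proof.
split.
- move=> x x_lim i; rewrite leNgt; apply/negP => xi_lt0.
  have [y [y_ge0 near_y]] : exists y, orthant y /\ forall j, `|y j - x j| < - x i.
    by apply: x_lim; rewrite oppr_gt0.
  by have := near_y i; have := y_ge0 i; rewrite ltr_norml => ? /andP[_ ?]; lra.
- split; first by move=> i.
  split; first by move=> x y x_ge0 y_ge0 i; rewrite addr_ge0.
  by move=> c x c_ge0 x_ge0 i; rewrite mulr_ge0.
- move=> x x_ge0 Nx_ge0; apply: funext => i.
  by have := x_ge0 i; have := Nx_ge0 i; lra.
- by exists (fun _ => 1); apply: in_interior_orthant => i; apply: ltr01.
Qed.

End LinearOperators.

Definition preim_structure (R : realType) n (P : 'M[R]_n)
    (K : forall j : nat, (kset n j -> R) -> Prop) (j : nat) (x : kset n j -> R) : Prop :=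
  K j (wedge_op P x).

Definition orthant_structure (R : realType) n (j : nat) : (kset n j -> R) -> Prop :=
  @orthant R (kset n j).

Section Similarity.
Variables (R : realType) (n : nat) (A B P : 'M[R]_n).
Variable K : forall j : nat, (kset n j -> R) -> Prop.
Hypotheses (P_unit : P \in unitmx) (defA : A = invmx P *m B *m P).

Lemma wedge_op_similar j (x : kset n j -> R) :
  wedge_op P (wedge_op A x) = wedge_op B (wedge_op P x).
Proof. by rewrite -!wedge_opM defA !mulmxA mulmxV // mul1mx. Qed.

Lemma TP_structure_preim : TP_structure K -> TP_structure (preim_structure P K).
Proof.
move=> K_TP j j_range.
exact: (proper_cone_preim (wedge_opK P_unit) (wedge_opVK P_unit) (K_TP j j_range)).
Qed.

Lemma GTP_preim : GTP B K -> GTP A (preim_structure P K).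
Proof.
by move=> B_GTP j j_range x Kx; rewrite /preim_structure wedge_op_similar; apply: B_GTP.
Qed.

Lemma GSTP_preim : GSTP B K -> GSTP A (preim_structure P K).
Proof.
move=> B_GSTP j j_range x Kx x_neq0.
have Px_neq0 : wedge_op P x <> (fun _ => 0).
  move=> Px0; apply: x_neq0; rewrite -(wedge_opK P_unit x) Px0.
  exact: (lin_op0 (minor (invmx P))).
apply: in_interior_preim; rewrite [lin_op _ _]wedge_op_similar.
exact: B_GSTP.
Qed.

End Similarity.

Lemma TP_structure_orthant (R : realType) n : TP_structure (@orthant_structure R n).
Proof. by move=> j _; apply: proper_cone_orthant. Qed.

Lemma TP_matrix_GTP (R : realType) n (B : 'M[R]_n) :
  TP_matrix B -> GTP B (@orthant_structure R n).
Proof.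
by move=> B_TP j j_range x x_ge0 I; apply: sumr_ge0 => J _; rewrite mulr_ge0 ?B_TP.
Qed.

Lemma STP_matrix_GSTP (R : realType) n (B : 'M[R]_n) :
  STP_matrix B -> GSTP B (@orthant_structure R n).
Proof.
move=> B_STP j j_range x x_ge0 x_neq0; apply: in_interior_orthant => I.
have [J0 xJ0_gt0] : exists J0, 0 < x J0.
  have [/existsP //|/existsPn x_le0] := boolP [exists J, 0 < x J].
  exfalso; apply: x_neq0.
  apply: funext => J; apply/eqP.
  by rewrite eq_le x_ge0 andbT leNgt x_le0.
rewrite /wedge_op (bigD1 J0) //= ltr_pwDl ?mulr_gt0 ?B_STP //.
by apply: sumr_ge0 => J _; rewrite mulr_ge0 // ltW // B_STP.
Qed.

Lemma similarR_GTP (R : realType) n (A B : 'M[R]_n) K :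
  similarR A B -> TP_structure K -> GTP B K ->
  exists K', TP_structure K' /\ GTP A K'.
Proof.
move=> [P P_unit defA] K_TP B_GTP; exists (preim_structure P K).
by split; [apply: TP_structure_preim | apply: GTP_preim defA _].
Qed.

Lemma similarR_GSTP (R : realType) n (A B : 'M[R]_n) K :
  similarR A B -> TP_structure K -> GSTP B K ->
  exists K', TP_structure K' /\ GSTP A K'.
Proof.
move=> [P P_unit defA] K_TP B_GSTP; exists (preim_structure P K).
by split; [apply: TP_structure_preim | apply: GSTP_preim defA _].
Qed.

Theorem proposition17 (R : realType) (n : nat) (A : 'M[R]_n) :
  [/\ (exists B : 'M[R]_n, similarR A B /\
         exists K, TP_structure K /\ GTP B K) ->
        exists K, TP_structure K /\ GTP A K,
      (exists B : 'M[R]_n, similarR A B /\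
         exists K, TP_structure K /\ GSTP B K) ->
        exists K, TP_structure K /\ GSTP A K,
      (exists B : 'M[R]_n, similarR A B /\ TP_matrix B) ->
        exists K, TP_structure K /\ GTP A K
    & (exists B : 'M[R]_n, similarR A B /\ STP_matrix B) ->
        exists K, TP_structure K /\ GSTP A K].
Proof.
split.
- by move=> [B [simAB [K [K_TP B_GTP]]]]; apply: similarR_GTP B_GTP.
- by move=> [B [simAB [K [K_TP B_GSTP]]]]; apply: similarR_GSTP B_GSTP.
- move=> [B [simAB B_TP]]; apply: similarR_GTP simAB _ (TP_matrix_GTP B_TP).
  exact: TP_structure_orthant.
- move=> [B [simAB B_STP]]; apply: similarR_GSTP simAB _ (STP_matrix_GSTP B_STP).
  exact: TP_structure_orthant.
Qed.
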